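(* Let $B=XCX^T$ where $X$ is a real non-singular $n\times n$ matrix and $C$ is a real symmetric $n\times n$ matrix, and let $\Pi$ be the orthogonal projection onto the column space of $B$. Then \[ B^{+}=\Pi X^{-T}C^{+}X^{-1}\Pi. \]
   Context: $M^{+}$ denotes the Moore–Penrose pseudo-inverse of $M$, and $X^{-T}=(X^{-1})^T$. *)

From HB Require Import structures.
From mathcomp Require Import all_boot all_order all_algebra.
From mathcomp Require Import reals.
Set Implicit Arguments. Unset Strict Implicit. Unset Printing Implicit Defensive.
Import Order.TTheory GRing.Theory Num.Theory.
Local Open Scope ring_scope.

(* Moore–Penrose pseudo-inverse, via the four Penrose conditions (real case,
   so conjugate transpose = transpose).  These conditions determine M^+ uniquely. *)
Definition is_pinv (R : realType) (m n : nat)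
  (M : 'M[R]_(m, n)) (P : 'M[R]_(n, m)) : Prop :=
  [/\ M *m P *m M = M,
      P *m M *m P = P,
      (M *m P)^T = M *m P
    & (P *m M)^T = P *m M].

(* Pi is the orthogonal projection onto the column space of B:
   symmetric, idempotent, and its column space equals that of B. *)
Definition is_orth_proj_colspace (R : realType) (n : nat)
  (B Pi : 'M[R]_n) : Prop :=
  [/\ Pi^T = Pi, Pi *m Pi = Pi & (Pi^T == B^T)%MS].

From HB Require Import structures.
From mathcomp Require Import all_boot all_order all_algebra.
From mathcomp Require Import reals.
Import Order.TTheory GRing.Theory Num.Theory.
Local Open Scope ring_scope.

(* For any generalized inverse G of B (i.e. B G B = B) one has
   B^+ = B^+ B B^+ = (B^+ B) G (B B^+), and X^-T C^+ X^-1 is such a G.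
   B B^+ and B^+ B are symmetric idempotents with the column space of B
   (B being symmetric), and a symmetric idempotent is determined by its
   column space, so both factors equal Pi. *)

Section FieldMatrices.
Context {F : fieldType}.

Lemma sym_idem_eqmx_eq (n : nat) (E G : 'M[F]_n) :
  E^T = E -> G^T = G -> E *m E = E -> G *m G = G -> (E == G)%MS -> E = G.
Proof.
move=> ET GT EE GG /andP[/submxP[A defE] /submxP[B defG]].
have EG : E *m G = E by rewrite {1}defE -mulmxA GG -defE.
have GE : G *m E = G by rewrite {1}defG -mulmxA EE -defG.
by rewrite -ET -EG trmx_mul ET GT GE.
Qed.

Lemma ginv_conj_unitmx (n : nat) (X Y C G : 'M[F]_n) :
  X \in unitmx -> Y \in unitmx -> C *m G *m C = C ->
  X *m C *m Y *m (invmx Y *m G *m invmx X) *m (X *m C *m Y) = X *m C *m Y.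
Proof.
move=> Xu Yu CGC.
rewrite !mulmxA mulmxK // mulmxKV //.
by rewrite -(mulmxA X) -(mulmxA X) CGC.
Qed.

End FieldMatrices.

Section PseudoInverse.
Context {R : realType}.

Lemma is_pinv_tr {m n : nat} {M : 'M[R]_(m, n)} {P} :
  is_pinv M P -> is_pinv M^T P^T.
Proof.
case=> MPM PMP MPT PMT; split.
- by rewrite -!trmx_mul mulmxA MPM.
- by rewrite -!trmx_mul mulmxA PMP.
- by rewrite -trmx_mul trmxK PMT.
- by rewrite -trmx_mul trmxK MPT.
Qed.

Lemma pinv_sandwich {m n : nat} {M : 'M[R]_(m, n)} {P G} :
  is_pinv M P -> M *m G *m M = M -> P = P *m M *m G *m (M *m P).
Proof. by case=> MPM PMP _ _ MGM; rewrite -{1}PMP -{1}MGM !mulmxA. Qed.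

Lemma mulmx_pinv_eqmx {m n : nat} {M : 'M[R]_(m, n)} {P} :
  is_pinv M P -> (M *m P == M^T)%MS.
Proof.
case=> MPM _ MPT _; apply/andP; split.
- by rewrite -MPT trmx_mul submxMl.
- by rewrite -{1}MPM trmx_mul MPT submxMl.
Qed.

Lemma mulmx_pinv_orth_proj {m n : nat} {M : 'M[R]_(m, n)} {P Pi} :
  is_pinv M P -> Pi^T = Pi -> Pi *m Pi = Pi -> (Pi^T == M^T)%MS ->
  M *m P = Pi.
Proof.
move=> MP PiT PiPi PiM; case: (MP) => MPM _ MPT _.
apply: sym_idem_eqmx_eq => //; first by rewrite mulmxA MPM.
have /andP[MPsubM MsubMP] := mulmx_pinv_eqmx MP.
move: PiM; rewrite PiT => /andP[PisubM MsubPi].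
by rewrite (submx_trans MPsubM) ?(submx_trans PisubM).
Qed.

End PseudoInverse.

Theorem mainTheorem18 (R : realType) (n : nat) (X C Bp Cp Pi : 'M[R]_n) :
  X \in unitmx ->
  C^T = C ->
  is_pinv (X *m C *m X^T) Bp ->
  is_pinv C Cp ->
  is_orth_proj_colspace (X *m C *m X^T) Pi ->
  Bp = Pi *m (invmx X)^T *m Cp *m invmx X *m Pi.
Proof.
move=> Xu CT pinvB [CCpC _ _ _] [PiT PiPi PiB].
have BT : (X *m C *m X^T)^T = X *m C *m X^T.
  by rewrite !trmx_mul trmxK CT mulmxA.
have BBp := mulmx_pinv_orth_proj pinvB PiT PiPi PiB.
have BpB : Bp *m (X *m C *m X^T) = Pi.
  have := mulmx_pinv_orth_proj (is_pinv_tr pinvB) PiT PiPi.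
  rewrite BT => /(_ PiB)/(congr1 trmx).
  by rewrite trmx_mul !trmxK BT PiT.
have ginvB : X *m C *m X^T *m ((invmx X)^T *m Cp *m invmx X)
               *m (X *m C *m X^T) = X *m C *m X^T.
  by rewrite trmx_inv ginv_conj_unitmx ?unitmx_tr.
by rewrite (pinv_sandwich pinvB ginvB) BpB BBp !mulmxA.
Qed.
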